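(* Let $\Upsilon_{0:k}$ be the Choi operator of a valid $k$-slot process tensor on $n$ qubits, and suppose it admits a matrix product operator (MPO) representation \[ \Upsilon_{0:k}=\sum_{\mu_1=1}^{D'_1}\cdots\sum_{\mu_k=1}^{D'_k}M^{(0)}_{\mu_1}\otimes M^{(1)}_{\mu_1\mu_2}\otimes\cdots\otimes M^{(k-1)}_{\mu_{k-1}\mu_k}\otimes M^{(k)}_{\mu_k}, \] where each $M^{(j)}_{\cdots}$ is an operator on $\mathcal{H}_{\mathfrak{i}_j}\otimes\mathcal{H}_{\mathfrak{o}_j}$, so that the inner (virtual) bond dimensions are $D'_j$. Then the joint probability distribution over Pauli trajectories \[ \Pr(x_0,\dots,x_k)=\frac{1}{\mathcal{N}}\mathrm{Tr}\Big[\Big(\bigotimes_{j=0}^k\Pi_{x_j}\Big)\Upsilon_{0:k}\Big],\qquad \mathcal{N}=\sum_{x_0,\dots,x_k\in\mathbb{P}^{(n)}}\mathrm{Tr}\Big[\Big(\bigotimes_{j=0}^k\Pi_{x_j}\Big)\Upsilon_{0:k}\Big], \] admits a matrix product state (MPS) representation \[ \Pr(x_0,\dots,x_k)=\sum_{\mu_1=1}^{D_1}\cdots\sum_{\mu_k=1}^{D_k}A^{(0)}_{x_0\mu_1}A^{(1)}_{\mu_1x_1\mu_2}\cdots A^{(k)}_{\mu_kx_k} \] with inner bond dimensions satisfying $D_j\le D'_j$ for all $j$.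
   Context: $\mathbb{P}^{(n)}=\{I,X,Y,Z\}^{\otimes n}$ is the set of $n$-qubit Pauli operators; for $x\in\mathbb{P}^{(n)}$, $\Pi_x=|x\rangle\!\rangle\langle\!\langle x|$ with $|x\rangle\!\rangle=(\mathbb{I}\otimes x)\sum_i|i\rangle|i\rangle$, acting on $\mathcal{H}_{\mathfrak{i}_j}\otimes\mathcal{H}_{\mathfrak{o}_j}$ at time step $j$. A $k$-slot process tensor has Choi operator $\Upsilon_{0:k}$ on $\bigotimes_{j=0}^k(\mathcal{H}_{\mathfrak{i}_j}\otimes\mathcal{H}_{\mathfrak{o}_j})$ (each factor $n$ qubits); it is valid iff $\Upsilon_{0:k}\ge0$ and there are operators $\Upsilon_{0:j}$ on the first $j+1$ slots ($\Upsilon_{0:k}$ the given one) with $\mathrm{Tr}_{\mathfrak{o}_j}[\Upsilon_{0:j}]=\Upsilon_{0:j-1}\otimes\mathbb{I}_{\mathfrak{i}_j}$ for $j\ge1$ and $\mathrm{Tr}_{\mathfrak{o}_0}[\Upsilon_{0:0}]=\mathbb{I}_{\mathfrak{i}_0}$. The distribution $\Pr$ is the spatiotemporal Pauli process obtained from $\Upsilon_{0:k}$ by the multi-time Pauli twirl. The $A^{(j)}$ are real/complex arrays indexed as shown. *)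

(* Complex scalars: an arbitrary numClosedFieldType C
   (e.g. algC, or complex R for R : rcfType). *)
From HB Require Import structures.
From mathcomp Require Import all_boot all_order all_algebra.
Set Implicit Arguments. Unset Strict Implicit. Unset Printing Implicit Defensive.
Import Order.TTheory GRing.Theory Num.Theory.
Local Open Scope ring_scope.

Section PT.
Variable C : numClosedFieldType.

(* computational basis of n qubits *)
Definition qb (n : nat) := {ffun 'I_n -> bool}.
(* basis of H_{i_j} (x) H_{o_j}: pair (input index, output index) *)
Definition slot (n : nat) := (qb n * qb n)%type.
(* basis of the first m slots *)
Definition ms (n m : nat) := {ffun 'I_m -> slot n}.
(* n-qubit Pauli labels: each qubit gets 0=I,1=X,2=Y,3=Z *)
Definition pauli (n : nat) := {ffun 'I_n -> 'I_4}.

(* operators on the Hilbert space with finite orthonormal basis T, as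
   matrices indexed by T *)
Definition op (T : Type) := T -> T -> C.

Definition tr (T : finType) (A : op T) : C := \sum_(t : T) A t t.
Definition trAB (T : finType) (A B : op T) : C :=
  \sum_(s : T) \sum_(t : T) A s t * B t s.
Definition psd (T : finType) (A : op T) : Prop :=
  forall v : T -> C, 0 <= \sum_(s : T) \sum_(t : T) (v s)^* * A s t * v t.

(* single-qubit Pauli matrices, entry (row r, column c) *)
Definition pauli1 (p : 'I_4) (r c : bool) : C :=
  match val p with
  | 0%N => if r == c then 1 else 0
  | 1%N => if r == c then 0 else 1
  | 2%N => if r == c then 0 else (if r then 'i else - 'i)
  | _ => if r == c then (if r then -1 else 1) else 0
  end.

Definition pauli_mx (n : nat) (x : pauli n) : op (qb n) :=
  fun r c => \prod_(q < n) pauli1 (x q) (r q) (c q).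

(* |x>> = (I (x) x) sum_i |i>|i>, component at (input a, output b) = x_{b a} *)
Definition choi_vec (n : nat) (x : pauli n) (s : slot n) : C :=
  pauli_mx x s.2 s.1.
Definition PiP (n : nat) (x : pauli n) : op (slot n) :=
  fun s t => choi_vec x s * (choi_vec x t)^*.

Definition tensPi (n k : nat) (xs : {ffun 'I_k.+1 -> pauli n}) : op (ms n k.+1) :=
  fun s t => \prod_(j < k.+1) PiP (xs j) (s j) (t j).

Definition ext (n m : nat) (a : ms n m) (s : slot n) : ms n m.+1 :=
  [ffun t : 'I_m.+1 => if unlift ord_max t is Some t' then a t' else s].
Definition single (n : nat) (s : slot n) : ms n 1 := [ffun _ => s].

Definition valid_pt (n k : nat) (U : op (ms n k.+1)) : Prop :=
  psd U /\
  exists V : forall m : nat, op (ms n m.+1),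
    V k = U /\
    (* Tr_{o_0}[Upsilon_{0:0}] = I_{i_0} *)
    (forall i i' : qb n,
        \sum_(o : qb n) V 0%N (single (i, o)) (single (i', o)) = (i == i')%:R) /\
    (* Tr_{o_j}[Upsilon_{0:j}] = Upsilon_{0:j-1} (x) I_{i_j}, 1 <= j <= k *)
    (forall m : nat, (m < k)%N -> forall (a b : ms n m.+1) (i i' : qb n),
        \sum_(o : qb n) V m.+1 (ext a (i, o)) (ext b (i', o))
          = V m a b * (i == i')%:R).

(* virtual bond index mu_i (1 <= i <= k) as a nat, from a bond
   configuration mu (coordinate i-1 holds mu_i); boundary (i = 0, k+1) gives 0 *)
Definition bond (k : nat) (D : 'I_k -> nat)
    (mu : {dffun forall t : 'I_k, 'I_(D t)}) (i : nat) : nat :=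
  if i is i'.+1 then oapp (fun t : 'I_k => nat_of_ord (mu t)) 0%N (insub i')
  else 0%N.

(* MPO: sum_{mu_1<D_1} ... sum_{mu_k<D_k} M^(0)_{mu_1} (x) M^(1)_{mu_1 mu_2}
   (x) ... (x) M^(k)_{mu_k};  M j l r is the core at slot j with left bond
   index l (ignored/0 for j = 0) and right bond index r (0 for j = k) *)
Definition mpo (n k : nat) (D : 'I_k -> nat)
    (M : nat -> nat -> nat -> op (slot n)) : op (ms n k.+1) :=
  fun a b => \sum_(mu : {dffun forall t : 'I_k, 'I_(D t)})
     \prod_(j < k.+1) M j (bond mu j) (bond mu j.+1) (a j) (b j).

Definition mps (n k : nat) (D : 'I_k -> nat)
    (A : nat -> nat -> pauli n -> nat -> C) (xs : {ffun 'I_k.+1 -> pauli n}) : C :=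
  \sum_(mu : {dffun forall t : 'I_k, 'I_(D t)})
     \prod_(j < k.+1) A j (bond mu j) (xs j) (bond mu j.+1).

Definition normN (n k : nat) (U : op (ms n k.+1)) : C :=
  \sum_(xs : {ffun 'I_k.+1 -> pauli n}) trAB (tensPi xs) U.
Definition prob (n k : nat) (U : op (ms n k.+1)) (xs : {ffun 'I_k.+1 -> pauli n}) : C :=
  trAB (tensPi xs) U / normN U.

End PT.

From HB Require Import structures.
From mathcomp Require Import all_boot all_order all_algebra.
Import Order.TTheory GRing.Theory Num.Theory.
Local Open Scope ring_scope.

(* Since (x)_j Pi_{x_j} is an elementary tensor, the trace of its product with
   each term of the MPO factorizes into the local traces
   Tr[Pi_{x_j} M^(j)_{mu_j mu_{j+1}}].  These numbers are MPS cores carrying the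
   same bond indices, so D_j = D'_j works; the normalization 1/N is absorbed
   into the first core. *)

Section PauliProcessMPS.
Variable C : numClosedFieldType.

Lemma trAB_sumr (T I : finType) (A : op C T) (B : I -> op C T) :
  trAB A (fun s t => \sum_i B i s t) = \sum_i trAB A (B i).
Proof.
rewrite /trAB; under eq_bigr do under eq_bigr do rewrite mulr_sumr.
by under eq_bigr do rewrite exchange_big; rewrite exchange_big.
Qed.

Lemma trAB_prod (T : finType) (m : nat) (A B : 'I_m -> op C T) :
  trAB (fun s t : {ffun 'I_m -> T} => \prod_j A j (s j) (t j))
       (fun s t => \prod_j B j (s j) (t j))
  = \prod_j trAB (A j) (B j).
Proof.
rewrite /trAB bigA_distr_bigA; apply: eq_bigr => s _.
rewrite bigA_distr_bigA; apply: eq_bigr => t _.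
by rewrite -big_split.
Qed.

Lemma trAB_tensPi_mpo (n k : nat) (D : 'I_k -> nat)
    (M : nat -> nat -> nat -> op C (slot n)) (xs : {ffun 'I_k.+1 -> pauli n}) :
  trAB (tensPi C xs) (mpo D M)
  = mps D (fun j l x r => trAB (PiP C x) (M j l r)) xs.
Proof. by rewrite trAB_sumr; apply: eq_bigr => mu _; rewrite -trAB_prod. Qed.

Lemma mulr_mps (n k : nat) (D : 'I_k -> nat) (A : nat -> nat -> pauli n -> nat -> C)
    (c : C) (xs : {ffun 'I_k.+1 -> pauli n}) :
  c * mps D A xs
  = mps D (fun j l x r => (if j == 0%N then c else 1) * A j l x r) xs.
Proof.
rewrite /mps mulr_sumr; apply: eq_bigr => mu _.
rewrite big_split /=; congr (_ * _).
by rewrite big_ord_recl /= big1 ?mulr1.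
Qed.

End PauliProcessMPS.

Theorem lemma1 (C : numClosedFieldType) (n k : nat) (Dp : 'I_k -> nat)
    (M : nat -> nat -> nat -> op C (slot n)) (U : op C (ms n k.+1)) :
  valid_pt U ->
  (forall a b : ms n k.+1, U a b = mpo Dp M a b) ->
  exists (D : 'I_k -> nat) (A : nat -> nat -> pauli n -> nat -> C),
    (forall j : 'I_k, (D j <= Dp j)%N) /\
    (forall xs : {ffun 'I_k.+1 -> pauli n}, prob U xs = mps D A xs).
Proof.
move=> _ U_mpo.
exists Dp, (fun j l x r => (if j == 0%N then (normN U)^-1 else 1)
                         * trAB (PiP C x) (M j l r)).
split=> // xs.
rewrite /prob (_ : trAB _ U = trAB (tensPi C xs) (mpo Dp M)).
  by rewrite trAB_tensPi_mpo mulrC mulr_mps.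
by apply: eq_bigr => s _; apply: eq_bigr => t _; rewrite U_mpo.
Qed.
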